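(* Let $\varphi$ be a basic existential or basic universal sentence of spread $m$ and range $r'$ over a graph language $L$, and let $C,M\notin L$ be distinct unary predicate symbols. Let $G$ be an $L$-interpretation and $\lambda$ a layering of $\overline G$. Let $r\ge r'$ and $\ell>4r$ be integers, let $R$ be an $(\ell,r)$-cover of integers, and let $p$ be an $m$-plan for $R$. Suppose that for each $I\in R$, $$G[\lambda^{-1}(I)],\ C:=\lambda^{-1}(M_{2r}(I)),\ M:=\lambda^{-1}(M_r(I))\models\varphi^{(p(I))}.$$ Then $G\models\varphi$.
   Context: A graph language $L$ consists of a binary predicate symbol $e$ and a finite set of unary predicate symbols. An $L$-interpretation $G$ consists of a graph $\overline G$ and a set $S_C\subseteq V(\overline G)$ for each unary $C\in L$; $e$ is interpreted as adjacency in $\overline G$. For $S\subseteq V(\overline G)$, $G[S]$ is the interpretation on $\overline G[S]$ with each unary predicate restricted to $S$; ''$H, C:=A, M:=B$'' denotes the expansion of $H$ with new unary predicates $C,M$ interpreted as $A,B$. A layering of a graph is a function $\lambda:V\to\mathbb Z$ with $|\lambda(u)-\lambda(v)|\le1$ on edges. $d(x,y)\le r$ abbreviates $(\exists z_0,\dots,z_r)\,z_0=x\land z_r=y\land\bigwedge_{i=1}^r(z_{i-1}=z_i\lor e(z_{i-1},z_i))$. An $r$-local formula is a formula $\psi$ with one free variable $x$ in which all quantifications are of the form $(\exists y: d(x,y)\le r)$ or $(\forall y: d(x,y)\le r)$. A basic existential sentence is one of the form $(\exists x_1,\dots,x_m)\bigwedge_{1\le i<j\le m}d(x_i,x_j)>2r\land\bigwedge_{i=1}^m\psi(x_i)$,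 and a basic universal sentence is one of the form $(\forall x_1,\dots,x_{m+1})\bigl(\bigwedge_{1\le i<j\le m+1}d(x_i,x_j)>2r\bigr)\Rightarrow\bigvee_{i=1}^{m+1}\psi(x_i)$, where in both cases $\psi$ is $r$-local; $m$ is the spread, $r$ the range and $\psi$ the core. For such $\varphi$ and an integer $k\ge0$, the $(C,M,k)$-variant $\varphi^{(k)}$ is $(\exists x_1,\dots,x_k)\bigwedge_{1\le i<j\le k}d(x_i,x_j)>2r\land\bigwedge_{i=1}^k(C(x_i)\land\psi(x_i))$ if $\varphi$ is basic existential, and $(\forall x_1,\dots,x_{k+1})\bigl(\bigwedge_{i=1}^{k+1}M(x_i)\land\bigwedge_{1\le i<j\le k+1}d(x_i,x_j)>2r\bigr)\Rightarrow\bigvee_{i=1}^{k+1}\psi(x_i)$ if $\varphi$ is basic universal. For integers $\ell\ge 2r+1$ and $n$, the set of all intervals $\{i,i+1,\dots,i+\ell-1\}$ with $i\equiv n\pmod{\ell-2r}$ is an $(\ell,r)$-cover of integers (there are exactly $\ell-2r$ distinct ones). For an integer $d\ge0$ and $I=\{i,\dots,i+\ell-1\}$ in a cover, $M_d(I)=\{i+d,\dots,i+\ell-d-1\}$. An $m$-plan for a cover $R$ is a function $p:R\to\mathbb Z_{\ge0}$ with $\sum_{I\in R}p(I)=m$. *)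

From Stdlib Require Import ZArith List Arith.
Import ListNotations.
Open Scope Z_scope.

Inductive lterm : Type := tX : lterm | tV : nat -> lterm.

(* Syntax of r-local formulas over a graph language: atoms e, =, unary predicates
   (symbols are natural numbers); all quantifications are bounded by d(x,y) <= r,
   where x is the unique free variable (the radius r is supplied at evaluation). *)
Inductive lform : Type :=
| LTrue : lform
| LFalse : lform
| LEq : lterm -> lterm -> lform
| LAdj : lterm -> lterm -> lform
| LPred : nat -> lterm -> lform
| LNot : lform -> lform
| LAnd : lform -> lform -> lform
| LOr : lform -> lform -> lform
| LImp : lform -> lform -> lform
| LExB : nat -> lform -> lform
| LAllB : nat -> lform -> lform.

Definition tclosed (bound : list nat) (t : lterm) : Prop :=
  match t with tX => True | tV n => In n bound end.

Fixpoint lclosed_aux (bound : list nat) (f : lform) : Prop :=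
  match f with
  | LTrue | LFalse => True
  | LEq a b | LAdj a b => tclosed bound a /\ tclosed bound b
  | LPred _ a => tclosed bound a
  | LNot g => lclosed_aux bound g
  | LAnd g h | LOr g h | LImp g h => lclosed_aux bound g /\ lclosed_aux bound h
  | LExB y g | LAllB y g => lclosed_aux (y :: bound) g
  end.
Definition lclosed (f : lform) : Prop := lclosed_aux [] f.

Fixpoint in_lang (L : list nat) (f : lform) : Prop :=
  match f with
  | LTrue | LFalse | LEq _ _ | LAdj _ _ => True
  | LPred c _ => In c L
  | LNot g => in_lang L g
  | LAnd g h | LOr g h | LImp g h => in_lang L g /\ in_lang L h
  | LExB _ g | LAllB _ g => in_lang L g
  end.

Section Sem.
Variable V : Type.
Variable D : V -> Prop.
Variable adj : V -> V -> Prop.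
Variable U : nat -> V -> Prop.

(* semantics of the formula d(x,y) <= r, written out: there are z_0..z_r in the domain
   with z_0 = x, z_r = y and z_{i-1} = z_i or e(z_{i-1}, z_i). *)
Definition dle (r : nat) (x y : V) : Prop :=
  exists z : nat -> V, z 0%nat = x /\ z r = y /\
    (forall i, (i <= r)%nat -> D (z i)) /\
    (forall i, (1 <= i <= r)%nat -> z (i - 1)%nat = z i \/ adj (z (i - 1)%nat) (z i)).

Definition upd (rho : nat -> V) (y : nat) (v : V) : nat -> V :=
  fun n => if Nat.eqb n y then v else rho n.

Definition tval (x : V) (rho : nat -> V) (t : lterm) : V :=
  match t with tX => x | tV n => rho n end.

Fixpoint leval (r : nat) (x : V) (rho : nat -> V) (f : lform) : Prop :=
  match f with
  | LTrue => True
  | LFalse => False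
  | LEq a b => tval x rho a = tval x rho b
  | LAdj a b => adj (tval x rho a) (tval x rho b)
  | LPred c a => U c (tval x rho a)
  | LNot g => ~ leval r x rho g
  | LAnd g h => leval r x rho g /\ leval r x rho h
  | LOr g h => leval r x rho g \/ leval r x rho h
  | LImp g h => leval r x rho g -> leval r x rho h
  | LExB y g => exists v, D v /\ dle r x v /\ leval r x (upd rho y v) g
  | LAllB y g => forall v, D v -> dle r x v -> leval r x (upd rho y v) g
  end.

(* psi(x) holds (psi closed except for x, so the environment is irrelevant) *)
Definition holds (r : nat) (psi : lform) (x : V) : Prop := leval r x (fun _ => x) psi.
End Sem.

Inductive bkind : Type := BExists | BForall.

Record basic : Type := mkBasic { bk : bkind; spread : nat; range : nat; core : lform }.

Definition far {V} (D : V -> Prop) adj (r : nat) (xs : nat -> V) (k : nat) : Prop :=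
  forall i j, (i < j < k)%nat -> ~ dle V D adj (2 * r) (xs i) (xs j).

Definition sat_basic {V} (D : V -> Prop) (adj : V -> V -> Prop) (U : nat -> V -> Prop)
    (phi : basic) : Prop :=
  let m := spread phi in let r := range phi in let psi := core phi in
  match bk phi with
  | BExists => exists xs : nat -> V, (forall i, (i < m)%nat -> D (xs i)) /\
      far D adj r xs m /\ (forall i, (i < m)%nat -> holds V D adj U r psi (xs i))
  | BForall => forall xs : nat -> V, (forall i, (i < S m)%nat -> D (xs i)) ->
      far D adj r xs (S m) -> exists i, (i < S m)%nat /\ holds V D adj U r psi (xs i)
  end.

Definition sat_variant {V} (D : V -> Prop) (adj : V -> V -> Prop) (U : nat -> V -> Prop)
    (Csym Msym : nat) (k : nat) (phi : basic) : Prop :=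
  let r := range phi in let psi := core phi in
  match bk phi with
  | BExists => exists xs : nat -> V, (forall i, (i < k)%nat -> D (xs i)) /\
      far D adj r xs k /\
      (forall i, (i < k)%nat -> U Csym (xs i) /\ holds V D adj U r psi (xs i))
  | BForall => forall xs : nat -> V, (forall i, (i < S k)%nat -> D (xs i)) ->
      (forall i, (i < S k)%nat -> U Msym (xs i)) ->
      far D adj r xs (S k) -> exists i, (i < S k)%nat /\ holds V D adj U r psi (xs i)
  end.

(* G[S]: unary predicates restricted to S (domain is S) *)
Definition restrictU {V} (S : V -> Prop) (U : nat -> V -> Prop) : nat -> V -> Prop :=
  fun c v => S v /\ U c v.

Definition expandU {V} (U : nat -> V -> Prop) (Csym : nat) (A : V -> Prop)
    (Msym : nat) (B : V -> Prop) : nat -> V -> Prop :=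
  fun c v => if Nat.eqb c Csym then A v else if Nat.eqb c Msym then B v else U c v.

Definition is_layering {V} (adj : V -> V -> Prop) (lam : V -> Z) : Prop :=
  forall u v, adj u v -> Z.abs (lam u - lam v) <= 1.

(* The (l,r)-cover determined by n: intervals {i,...,i+l-1}, represented by their start i,
   with i = n mod (l - 2r). *)
Definition in_cover (l r : nat) (n i : Z) : Prop :=
  exists k : Z, i = n + k * (Z.of_nat l - 2 * Z.of_nat r).

(* vertices whose layer lies in M_d(I) for I = {i,...,i+l-1}; d = 0 gives I itself *)
Definition layer_Md {V} (lam : V -> Z) (l : nat) (i : Z) (d : nat) : V -> Prop :=
  fun v => i + Z.of_nat d <= lam v <= i + Z.of_nat l - Z.of_nat d - 1.

Definition is_plan (l r : nat) (n : Z) (p : Z -> nat) (m : nat) : Prop :=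
  exists s : list Z, NoDup s /\ (forall i, In i s -> in_cover l r n i) /\
    (forall i, in_cover l r n i -> p i <> 0%nat -> In i s) /\
    fold_right (fun i acc => (p i + acc)%nat) 0%nat s = m.

From Stdlib Require Import ZArith List Arith Lia.

(* Since the layering changes by at most one along an edge, the r-ball of a vertex whose
   layer lies in M_r(I) stays inside lambda^-1(I); so r-local formulas, and distances up to
   2r from points of M_2r(I), are evaluated identically in G and in the window
   G[lambda^-1(I)].  Existential case: the p(I) witnesses from each window lie in
   M_2r(I), and cores M_2r(I), M_2r(J) of distinct intervals are more than 2r layers
   apart, so the m witnesses together are 2r-scattered in G.  Universal case: each of
   m+1 scattered points lies in M_r(I) for some interval I of the cover; as the plan sums
   to m, some I receives p(I)+1 of them, and the variant in that window produces a point
   satisfying the core. *)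

Section Paths.
Variables (V : Type) (adj : V -> V -> Prop).

Lemma dle_sym (adj_sym : forall u v, adj u v -> adj v u) D k x y :
  dle V D adj k x y -> dle V D adj k y x.
Proof.
  intros [z [Hx [Hy [HD Hstep]]]]. exists (fun j => z (k - j)%nat). repeat split.
  - now rewrite Nat.sub_0_r.
  - now rewrite Nat.sub_diag.
  - intros j Hj. apply HD; lia.
  - intros j Hj. destruct (Hstep (k - j + 1)%nat ltac:(lia)) as [E|E];
      replace (k - j + 1 - 1)%nat with (k - j)%nat in E by lia;
      replace (k - (j - 1))%nat with (k - j + 1)%nat by lia; auto.
Qed.

Lemma dle_forget_domain D k x y : dle V D adj k x y -> dle V (fun _ => True) adj k x y.
Proof. intros [z [Hx [Hy [_ Hstep]]]]. exists z; repeat split; auto. Qed.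

Lemma dle_target_in_domain D k x y : dle V D adj k x y -> D y.
Proof. intros [z [_ [Hy [HD _]]]]. subst y. apply HD; lia. Qed.

Variable lam : V -> Z.
Hypothesis lam_lay : is_layering adj lam.

Lemma layer_drift_along_path (z : nat -> V) k :
  (forall i, (1 <= i <= k)%nat -> z (i - 1)%nat = z i \/ adj (z (i - 1)%nat) (z i)) ->
  forall j, (j <= k)%nat -> Z.abs (lam (z j) - lam (z 0%nat)) <= Z.of_nat j.
Proof.
  intros Hstep j. induction j as [|j IH]; intros Hj.
  - rewrite Z.sub_diag; simpl; lia.
  - specialize (IH ltac:(lia)).
    destruct (Hstep (S j) ltac:(lia)) as [E|E]; replace (S j - 1)%nat with j in E by lia.
    + rewrite <- E. lia.
    + apply lam_lay in E. lia.
Qed.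

Lemma dle_layer_bound D k x y : dle V D adj k x y -> Z.abs (lam y - lam x) <= Z.of_nat k.
Proof.
  intros [z [Hx [Hy [_ Hstep]]]]. subst x y.
  apply (layer_drift_along_path z k Hstep k); lia.
Qed.

Lemma layer_Md_mono l i d d' v :
  (d <= d')%nat -> layer_Md lam l i d' v -> layer_Md lam l i d v.
Proof. unfold layer_Md; intros; lia. Qed.

Lemma dle_in_window l i k x y :
  layer_Md lam l i k x -> dle V (fun _ => True) adj k x y -> dle V (layer_Md lam l i 0) adj k x y.
Proof.
  intros Hx [z [Hz0 [Hzk [_ Hstep]]]]. exists z. split; [|split; [|split]]; auto.
  intros j Hj. pose proof (layer_drift_along_path z k Hstep j Hj). subst x.
  unfold layer_Md in *. lia.
Qed.

End Paths.

Section Locality.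
Variables (V : Type) (adj : V -> V -> Prop) (lam : V -> Z).
Hypothesis lam_lay : is_layering adj lam.
Variables (L : list nat) (U : nat -> V -> Prop) (Csym Msym : nat).
Hypotheses (C_L : ~ In Csym L) (M_L : ~ In Msym L).

Lemma upd_valued_in (S : V -> Prop) rho y v :
  (forall q, S (rho q)) -> S v -> forall q, S (upd V rho y v q).
Proof. intros Hrho Hv q. unfold upd. destruct (Nat.eqb q y); auto. Qed.

Lemma leval_window_iff A B l i k x f :
  layer_Md lam l i k x -> in_lang L f -> forall rho, (forall q, layer_Md lam l i 0 (rho q)) ->
  leval V (layer_Md lam l i 0) adj
    (expandU (restrictU (layer_Md lam l i 0) U) Csym A Msym B) k x rho f
  <-> leval V (fun _ => True) adj U k x rho f.
Proof.
  intros Hx. induction f as [| | | |c t|f IH|f IHf g IHg|f IHf g IHg|f IHf g IHg|y f IH|y f IH];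
    intros HL rho Hrho; simpl in *; try tauto.
  - unfold expandU, restrictU.
    destruct (Nat.eqb_spec c Csym); [subst; contradiction|].
    destruct (Nat.eqb_spec c Msym); [subst; contradiction|].
    assert (layer_Md lam l i 0 (tval V x rho t))
      by (destruct t; simpl; auto; apply (layer_Md_mono V lam l i 0 k); auto; lia).
    tauto.
  - rewrite (IH HL rho Hrho). tauto.
  - destruct HL as [Hf Hg]. rewrite (IHf Hf rho Hrho), (IHg Hg rho Hrho). tauto.
  - destruct HL as [Hf Hg]. rewrite (IHf Hf rho Hrho), (IHg Hg rho Hrho). tauto.
  - destruct HL as [Hf Hg]. rewrite (IHf Hf rho Hrho), (IHg Hg rho Hrho). tauto.
  - split.
    + intros [v [Hv [Hd Hf]]]. exists v. split; [exact I|split].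
      * exact (dle_forget_domain V adj _ k x v Hd).
      * apply (IH HL); auto. apply upd_valued_in; auto.
    + intros [v [_ [Hd Hf]]].
      pose proof (dle_in_window V adj lam lam_lay l i k x v Hx Hd) as Hd'.
      pose proof (dle_target_in_domain V adj _ k x v Hd') as Hv.
      exists v. split; [|split]; auto.
      apply (IH HL); auto. apply upd_valued_in; auto.
  - split.
    + intros Hall v _ Hd.
      pose proof (dle_in_window V adj lam lam_lay l i k x v Hx Hd) as Hd'.
      pose proof (dle_target_in_domain V adj _ k x v Hd') as Hv.
      apply (IH HL); [apply upd_valued_in; auto|]. auto.
    + intros Hall v Hv Hd.
      apply (IH HL); [apply upd_valued_in; auto|].
      apply Hall; [exact I|]. exact (dle_forget_domain V adj _ k x v Hd).
Qed.

End Locality.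

Definition plan_sum (p : Z -> nat) (s : list Z) : nat :=
  fold_right (fun i acc => (p i + acc)%nat) 0%nat s.

Lemma pigeonhole_fiber (c : nat -> Z) (p : Z -> nat) s ks :
  NoDup ks -> (forall k, In k ks -> In (c k) s \/ p (c k) = 0%nat) ->
  (plan_sum p s < length ks)%nat ->
  exists I ks', NoDup ks' /\ incl ks' ks /\ (forall k, In k ks' -> c k = I) /\
    (p I < length ks')%nat.
Proof.
  revert ks. induction s as [|a s IH]; intros ks Hks Hin Hlen; simpl in Hlen.
  - destruct ks as [|k ks]; simpl in Hlen; [lia|].
    destruct (Hin k (or_introl eq_refl)) as [[]|Hp0].
    exists (c k), (k :: nil). repeat split.
    + constructor; [intros []|constructor].
    + intros y [<-|[]]. now left.
    + intros y [<-|[]]. reflexivity.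
    + simpl. lia.
  - set (hit := fun k => Z.eqb (c k) a).
    pose proof (filter_length hit ks) as Hsplit.
    destruct (le_lt_dec (length (filter hit ks)) (p a)) as [Hfew|Hmany].
    + destruct (IH (filter (fun k => negb (hit k)) ks)) as [I [ks' [H1 [H2 [H3 H4]]]]].
      * now apply NoDup_filter.
      * intros k Hk. apply filter_In in Hk as [Hk Hmiss].
        unfold hit in Hmiss. destruct (Z.eqb_spec (c k) a); [discriminate|].
        destruct (Hin k Hk) as [[E|E]|E]; auto; congruence.
      * lia.
      * exists I, ks'. repeat split; auto.
        intros y Hy. apply H2, filter_In in Hy. tauto.
    + exists a, (filter hit ks). repeat split.
      * now apply NoDup_filter.
      * intros y Hy. apply filter_In in Hy. tauto.
      * intros y Hy. apply filter_In in Hy as [_ Hy]. now apply Z.eqb_eq.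
      * exact Hmany.
Qed.

Section Cover.
Variables (l r : nat) (n : Z).

(* the start of the cover interval whose M_r-core contains the layer z *)
Definition cover_start (z : Z) : Z :=
  let w := Z.of_nat l - 2 * Z.of_nat r in n + ((z - n - Z.of_nat r) / w) * w.

Lemma cover_start_in_cover z : in_cover l r n (cover_start z).
Proof. eexists. reflexivity. Qed.

Lemma cover_start_core z : (2 * r < l)%nat ->
  cover_start z + Z.of_nat r <= z <= cover_start z + Z.of_nat l - Z.of_nat r - 1.
Proof.
  intros Hl. unfold cover_start. set (w := Z.of_nat l - 2 * Z.of_nat r).
  assert (Hw : 0 < w) by lia.
  pose proof (Z.div_mod (z - n - Z.of_nat r) w ltac:(lia)).
  pose proof (Z.mod_pos_bound (z - n - Z.of_nat r) w Hw).
  rewrite (Z.mul_comm _ w). lia.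
Qed.

(* Consecutive cover intervals overlap in exactly 2r layers, so the M_2r-cores of
   distinct intervals are at layer distance more than 2r. *)
Lemma cover_cores_far_apart a b x y : (4 * r < l)%nat ->
  in_cover l r n a -> in_cover l r n b -> a <> b ->
  a + Z.of_nat (2 * r) <= x <= a + Z.of_nat l - Z.of_nat (2 * r) - 1 ->
  b + Z.of_nat (2 * r) <= y <= b + Z.of_nat l - Z.of_nat (2 * r) - 1 ->
  Z.of_nat (2 * r) < Z.abs (x - y).
Proof.
  intros Hl [ka Ea] [kb Eb] Hab Hx Hy.
  set (w := Z.of_nat l - 2 * Z.of_nat r) in *.
  assert (ka <> kb) by (intro; subst; congruence).
  destruct (Z.lt_total ka kb) as [h|[h|h]]; [|congruence|].
  - assert ((kb - ka) * w >= w) by nia. lia.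
  - assert ((ka - kb) * w >= w) by nia. lia.
Qed.

End Cover.

Lemma far_concat {V} (D : V -> Prop) adj k (ys xs : nat -> V) a b :
  far D adj k ys a -> far D adj k xs b ->
  (forall i j, (i < a)%nat -> (j < b)%nat -> ~ dle V D adj (2 * k) (ys i) (xs j)) ->
  far D adj k (fun j => if (j <? a)%nat then ys j else xs (j - a)%nat) (a + b).
Proof.
  intros Hys Hxs Hcross i j Hij.
  destruct (Nat.ltb_spec i a), (Nat.ltb_spec j a).
  - apply Hys; lia.
  - apply Hcross; lia.
  - lia.
  - apply Hxs; lia.
Qed.

Definition window_preds {V} (U : nat -> V -> Prop) (lam : V -> Z) (l r : nat) (i : Z)
    (Csym Msym : nat) : nat -> V -> Prop :=
  expandU (restrictU (layer_Md lam l i 0) U)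
    Csym (layer_Md lam l i (2 * r)) Msym (layer_Md lam l i r).

Section Windows.
Variables (V : Type) (adj : V -> V -> Prop) (L : list nat) (U : nat -> V -> Prop).
Variables (phi : basic) (Csym Msym : nat) (lam : V -> Z) (r l : nat) (n : Z) (p : Z -> nat).
Hypotheses (adj_sym : forall u v, adj u v -> adj v u) (phi_L : in_lang L (core phi))
  (C_L : ~ In Csym L) (M_L : ~ In Msym L)
  (lam_lay : is_layering adj lam) (Hr : (range phi <= r)%nat) (Hl : (4 * r < l)%nat).
Hypothesis windows_sat : forall i, in_cover l r n i ->
  sat_variant (layer_Md lam l i 0) adj (window_preds U lam l r i Csym Msym) Csym Msym (p i) phi.

Lemma window_preds_C i v : window_preds U lam l r i Csym Msym Csym v = layer_Md lam l i (2 * r) v.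
Proof. unfold window_preds, expandU. now rewrite Nat.eqb_refl. Qed.

Lemma holds_window_iff i x : layer_Md lam l i r x ->
  holds V (layer_Md lam l i 0) adj (window_preds U lam l r i Csym Msym) (range phi) (core phi) x
  <-> holds V (fun _ => True) adj U (range phi) (core phi) x.
Proof.
  intros Hx. apply (leval_window_iff V adj lam lam_lay L U Csym Msym C_L M_L).
  - exact (layer_Md_mono V lam l i _ r x Hr Hx).
  - exact phi_L.
  - intros _. exact (layer_Md_mono V lam l i 0 r x (Nat.le_0_l r) Hx).
Qed.

Lemma far_family_of_windows (Hex : bk phi = BExists) (v0 : V) s :
  NoDup s -> (forall i, In i s -> in_cover l r n i) ->
  exists xs : nat -> V,
    (forall k, (k < plan_sum p s)%nat -> exists i, In i s /\ layer_Md lam l i (2 * r) (xs k)) /\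
    far (fun _ => True) adj (range phi) xs (plan_sum p s) /\
    (forall k, (k < plan_sum p s)%nat -> holds V (fun _ => True) adj U (range phi) (core phi) (xs k)).
Proof.
  induction s as [|a s IH]; intros Hnd Hcov; simpl plan_sum.
  - exists (fun _ => v0). split; [|split]; intros k; simpl; lia.
  - apply NoDup_cons_iff in Hnd as [Ha_s Hnd].
    destruct (IH Hnd (fun i Hi => Hcov i (or_intror Hi))) as [xs [Xcore [Xfar Xholds]]].
    assert (Ha := Hcov a (or_introl eq_refl)).
    pose proof (windows_sat a Ha) as Hsat. unfold sat_variant in Hsat. rewrite Hex in Hsat.
    destruct Hsat as [ys [_ [Yfar Ycore]]].
    assert (Yin : forall k, (k < p a)%nat -> layer_Md lam l a (2 * r) (ys k))
      by (intros k Hk; rewrite <- window_preds_C; apply Ycore, Hk).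
    exists (fun k => if (k <? p a)%nat then ys k else xs (k - p a)%nat). split; [|split].
    + intros k Hk. destruct (Nat.ltb_spec k (p a)).
      * exists a. split; [now left | auto].
      * destruct (Xcore (k - p a)%nat ltac:(lia)) as [i [Hi Hxi]]. exists i. split; [now right | auto].
    + apply far_concat; auto.
      * intros i j Hij Hd. apply (Yfar i j Hij).
        apply (dle_in_window V adj lam lam_lay); auto.
        apply (layer_Md_mono V lam l a _ (2 * r)); [lia | apply Yin; lia].
      * intros i j Hi Hj Hd. destruct (Xcore j Hj) as [b [Hb Hxb]].
        assert (Hab : a <> b) by (intro; subst; contradiction).
        pose proof (Yin i Hi) as Hya. unfold layer_Md in Hya, Hxb.
        pose proof (cover_cores_far_apart l r n a b _ _ Hl Ha (Hcov b (or_intror Hb)) Hab Hya Hxb).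
        pose proof (dle_layer_bound V adj lam lam_lay _ _ _ _ Hd). lia.
    + intros k Hk. destruct (Nat.ltb_spec k (p a)) as [Hka|Hka].
      * apply (holds_window_iff a).
        -- apply (layer_Md_mono V lam l a r (2 * r)); [lia | auto].
        -- apply Ycore, Hka.
      * apply Xholds. lia.
Qed.

Hypothesis CM : Csym <> Msym.

Lemma window_preds_M i v : window_preds U lam l r i Csym Msym Msym v = layer_Md lam l i r v.
Proof.
  unfold window_preds, expandU. destruct (Nat.eqb_spec Msym Csym); [congruence|].
  now rewrite Nat.eqb_refl.
Qed.

Lemma sat_forall_of_windows (Hall : bk phi = BForall) s :
  (forall i, in_cover l r n i -> p i <> 0%nat -> In i s) -> plan_sum p s = spread phi ->
  sat_basic (fun _ => True) adj U phi.
Proof.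
  intros Hsupp Hsum. unfold sat_basic. rewrite Hall. intros xs _ Hfar.
  set (c := fun k => cover_start l r n (lam (xs k))).
  destruct (pigeonhole_fiber c p s (seq 0 (S (spread phi)))) as [I [ks [Hnd [Hincl [HcI Hmany]]]]].
  - apply seq_NoDup.
  - intros k _. destruct (Nat.eq_dec (p (c k)) 0); [now right | left].
    apply Hsupp; auto. apply cover_start_in_cover.
  - rewrite length_seq, Hsum. lia.
  - assert (HI : in_cover l r n I).
    { destruct ks as [|k ks]; [simpl in Hmany; lia|].
      rewrite <- (HcI k (or_introl eq_refl)). apply cover_start_in_cover. }
    assert (Hks : forall j, (j < S (p I))%nat -> In (nth j ks 0%nat) ks)
      by (intros; apply nth_In; lia).
    assert (Hcore : forall j, (j < S (p I))%nat -> layer_Md lam l I r (xs (nth j ks 0%nat))).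
    { intros j Hj. rewrite <- (HcI _ (Hks j Hj)). apply cover_start_core. lia. }
    pose proof (windows_sat I HI) as Hsat. unfold sat_variant in Hsat. rewrite Hall in Hsat.
    destruct (Hsat (fun j => xs (nth j ks 0%nat))) as [j [Hj Hholds]].
    + intros j Hj. apply (layer_Md_mono V lam l I 0 r); [lia | auto].
    + intros j Hj. rewrite window_preds_M. auto.
    + intros j1 j2 Hj Hd. apply dle_forget_domain in Hd.
      assert (Hne : nth j1 ks 0%nat <> nth j2 ks 0%nat)
        by (intro E; apply (proj1 (NoDup_nth ks 0%nat) Hnd) in E; lia).
      pose proof (proj1 (in_seq _ _ _) (Hincl _ (Hks j1 ltac:(lia)))).
      pose proof (proj1 (in_seq _ _ _) (Hincl _ (Hks j2 ltac:(lia)))).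
      destruct (Nat.lt_total (nth j1 ks 0%nat) (nth j2 ks 0%nat)) as [h|[h|h]].
      * exact (Hfar (nth j1 ks 0%nat) (nth j2 ks 0%nat) ltac:(lia) Hd).
      * contradiction.
      * exact (Hfar (nth j2 ks 0%nat) (nth j1 ks 0%nat) ltac:(lia) (dle_sym V adj adj_sym _ _ _ _ Hd)).
    + exists (nth j ks 0%nat). split.
      * pose proof (proj1 (in_seq _ _ _) (Hincl _ (Hks j Hj))). lia.
      * exact (proj1 (holds_window_iff I _ (Hcore j Hj)) Hholds).
Qed.

End Windows.

Theorem mainTheorem13
  (V : Type) (adj : V -> V -> Prop)
  (adj_sym : forall u v, adj u v -> adj v u) (adj_irr : forall v, ~ adj v v)
  (V_fin : exists vs : list V, forall v, In v vs)
  (L : list nat) (U : nat -> V -> Prop)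
  (phi : basic) (phi_closed : lclosed (core phi)) (phi_L : in_lang L (core phi))
  (Csym Msym : nat) (CM : Csym <> Msym) (C_L : ~ In Csym L) (M_L : ~ In Msym L)
  (lam : V -> Z) (lam_lay : is_layering adj lam)
  (r l : nat) (Hr : (range phi <= r)%nat) (Hl : (4 * r < l)%nat)
  (n : Z) (p : Z -> nat) (Hp : is_plan l r n p (spread phi))
  (H : forall i : Z, in_cover l r n i ->
     sat_variant (layer_Md lam l i 0) adj
       (expandU (restrictU (layer_Md lam l i 0) U)
          Csym (layer_Md lam l i (2 * r)) Msym (layer_Md lam l i r))
       Csym Msym (p i) phi) :
  sat_basic (fun _ => True) adj U phi.
Proof.
  destruct Hp as [s [Hnd [Hcov [Hsupp Hsum]]]]. fold (plan_sum p s) in Hsum.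
  destruct (bk phi) eqn:Hkind.
  - (* when m = 0 the witness family is arbitrary, but V must be inhabited *)
    pose proof (H n ltac:(exists 0; lia)) as Hn.
    unfold sat_variant in Hn. rewrite Hkind in Hn. destruct Hn as [ys _].
    destruct (far_family_of_windows V adj L U phi Csym Msym lam r l n p
                phi_L C_L M_L lam_lay Hr Hl H Hkind (ys 0%nat) s Hnd Hcov)
      as [xs [_ [Hfar Hholds]]].
    unfold sat_basic. rewrite Hkind, <- Hsum.
    exists xs. split; [intros; exact I | split; assumption].
  - exact (sat_forall_of_windows V adj L U phi Csym Msym lam r l n p
             adj_sym phi_L C_L M_L lam_lay Hr Hl H CM Hkind s Hsupp Hsum).
Qed.
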